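(* Let $(Q,F)$ be a finite ice quiver with $Q_0=\{1,\dots,m\}$ and $F_0=\{n+1,\dots,m\}$ ($1\le n\le m$), with Euler matrix $\widehat B$, and assume $\det\widehat B\neq0$. Let $\widetilde B$ be the $m\times n$ matrix formed by the first $n$ columns of $\widehat B$ and $\Lambda=|\det\widehat B|\cdot(\widehat B^{-T}-\widehat B^{-1})$. Then $(\widetilde B,\Lambda)$ is a compatible pair, and its type is $2|\det\widehat B|\cdot I_n$.
   Context: An ice quiver $(Q,F)$ is a quiver $Q$ with a subquiver $F$ (frozen vertices and arrows). The Euler matrix $\widehat B=(b_{ij})_{1\le i,j\le m}$ is defined by $b_{ii}=0$ for $1\le i\le n$, $b_{ii}=1$ for $i>n$, and for $i\neq j$, $b_{ij}=\#\{\text{unfrozen arrows } i\to j\}-\#\{\text{arrows } j\to i\}$. A pair $(\widetilde B,\Lambda)$ of an integer $m\times n$ matrix and a skew-symmetric integer $m\times m$ matrix is compatible if $\widetilde B^T\Lambda=(S\mid\mathbf 0)$ where $S$ is an $n\times n$ diagonal matrix with strictly positive integer diagonal entries and $\mathbf 0$ is the $n\times(m-n)$ zero matrix; $S$ is called the type. *)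

From HB Require Import structures.
From mathcomp Require Import all_boot all_order all_algebra.
Set Implicit Arguments. Unset Strict Implicit. Unset Printing Implicit Defensive.
Import Order.TTheory GRing.Theory Num.Theory.
Local Open Scope ring_scope.

(* A finite ice quiver with vertex set 'I_(n + k) (paper: {1,...,m}, m = n+k);
   the frozen vertices are those i with n <= i (paper: {n+1,...,m}). *)
Record ice_quiver (n k : nat) := IceQuiver {
  arrow : finType;
  src : arrow -> 'I_(n + k);
  tgt : arrow -> 'I_(n + k);
  frozen_arrow : pred arrow;
  frozen_arrowP : forall a, frozen_arrow a -> (n <= src a)%N /\ (n <= tgt a)%N
}.
Arguments src {n k} i _ : rename.
Arguments tgt {n k} i _ : rename.
Arguments frozen_arrow {n k} i _ : rename.

Definition euler_matrix n k (Q : ice_quiver n k) : 'M[int]_(n + k) :=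
  \matrix_(i, j)
    if i == j then (if (i < n)%N then 0 else 1)
    else (#|[set a | ~~ frozen_arrow Q a & (src Q a == i) && (tgt Q a == j)]|%:Z
          - #|[set a | (src Q a == j) && (tgt Q a == i)]|%:Z).

Definition exchange_matrix n k (Q : ice_quiver n k) : 'M[int]_(n + k, n) :=
  lsubmx (euler_matrix Q).

Definition lambda_of n k (Q : ice_quiver n k) : 'M[rat]_(n + k) :=
  let Bq := map_mx (fun z : int => z%:~R : rat) (euler_matrix Q) in
  (`|\det (euler_matrix Q)|%:~R : rat) *: ((invmx Bq)^T - invmx Bq).

Definition skew_symmetric m (L : 'M[int]_m) := L^T = - L.

Definition compatible_of_type n k (Bt : 'M[int]_(n + k, n))
    (L : 'M[int]_(n + k)) (S : 'M[int]_n) :=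
  [/\ skew_symmetric L,
      is_diag_mx S,
      (forall i, 0 < S i i) &
      Bt^T *m L = row_mx S (0 : 'M[int]_(n, k))].

From mathcomp Require Import all_boot all_order all_algebra.
Import Order.TTheory GRing.Theory Num.Theory.
Local Open Scope ring_scope.

(* Since B^-1 = adj B / det B, Lambda = sg(det B) (adj B^T - adj B), an integer
   skew-symmetric matrix.  For any square A,
   A^T (adj A^T - adj A) = 2 det A - (A + A^T) adj A,
   and the first n rows of B + B^T vanish: an arrow at a mutable vertex is
   never frozen, so it is counted once in b_ij and once, negatively, in b_ji.
   Hence the first n rows of B^T Lambda are 2 |det B| (I_n | 0). *)

Section EulerMatrix.
Variables (n k : nat) (Q : ice_quiver n k).

Lemma frozen_arrow_off_mutable (a : arrow Q) (i : 'I_(n + k)) :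
  (i < n)%N -> frozen_arrow Q a -> (src Q a != i) && (tgt Q a != i).
Proof.
move=> lt_in /frozen_arrowP [le_ns le_nt].
by apply/andP; split; apply: contraTneq lt_in => <-; rewrite -leqNgt.
Qed.

Lemma card_unfrozen_arrows_at_mutable (i j : 'I_(n + k)) :
  (i < n)%N || (j < n)%N ->
  #|[set a | ~~ frozen_arrow Q a & (src Q a == i) && (tgt Q a == j)]| =
  #|[set a | (src Q a == i) && (tgt Q a == j)]|.
Proof.
move=> mut_ij; apply: eq_card => a; rewrite !inE.
case: (boolP (frozen_arrow Q a)) => //= fr_a.
case/orP: mut_ij =>
  /frozen_arrow_off_mutable/(_ fr_a)/andP[/negbTE ns /negbTE nt];
  by rewrite ?ns ?nt ?andbF.
Qed.

Lemma euler_matrix_sym_mutable (i j : 'I_(n + k)) : (i < n)%N ->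
  (euler_matrix Q + (euler_matrix Q)^T) i j = 0.
Proof.
move=> lt_in; rewrite !mxE [j == i]eq_sym.
case: eqP => [<-|_]; first by rewrite lt_in.
rewrite !card_unfrozen_arrows_at_mutable ?lt_in ?orbT //.
by rewrite -opprB addNr.
Qed.

Lemma usubmx_euler_matrix_sym :
  usubmx (euler_matrix Q + (euler_matrix Q)^T) = 0.
Proof.
by apply/matrixP => i j; rewrite mxE euler_matrix_sym_mutable ?mxE /= ?ltn_ord.
Qed.

End EulerMatrix.

Definition skew_adj {R : comRingType} {m : nat} (A : 'M[R]_m) : 'M[R]_m :=
  (\adj A)^T - \adj A.

Lemma trmx_skew_adj (R : comRingType) m (A : 'M[R]_m) :
  (skew_adj A)^T = - skew_adj A.
Proof. by rewrite /skew_adj linearB /= trmxK opprB. Qed.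

Lemma mulmx_tr_skew_adj (R : comRingType) m (A : 'M[R]_m) :
  A^T *m skew_adj A = (\det A *+ 2)%:M - (A + A^T) *m \adj A.
Proof.
have trA_trAdj : A^T *m (\adj A)^T = (\det A)%:M.
  by rewrite -trmx_mul mul_adj_mx tr_scalar_mx.
have trA_adj : A^T *m \adj A = (A + A^T) *m \adj A - (\det A)%:M.
  by rewrite mulmxDl mul_mx_adj addrAC subrr add0r.
by rewrite mulmxBr trA_trAdj trA_adj opprB addrA raddfMn mulr2n.
Qed.

Lemma usubmx_mul_skew_adj (R : comRingType) n k (A : 'M[R]_(n + k)) :
  usubmx (A + A^T) = 0 ->
  usubmx (A^T *m skew_adj A) = row_mx (\det A *+ 2)%:M 0.
Proof.
move=> sym_top; rewrite mulmx_tr_skew_adj linearB /= -mul_usub_mx sym_top.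
by rewrite mul0mx subr0 scalar_mx_block col_mxKu.
Qed.

Lemma det_scale_skew_invmx (F : fieldType) m (A : 'M[F]_m) : A \in unitmx ->
  \det A *: ((invmx A)^T - invmx A) = skew_adj A.
Proof.
move=> unitA; have detA_neq0 : \det A != 0 by rewrite -unitfE -unitmxE.
by rewrite /invmx unitA linearZ /= -scalerBr scalerA mulfV ?scale1r.
Qed.

Lemma lambda_of_sg_skew_adj n k (Q : ice_quiver n k) :
  \det (euler_matrix Q) != 0 ->
  lambda_of Q = map_mx (fun z : int => z%:~R : rat)
    (Num.sg (\det (euler_matrix Q)) *: skew_adj (euler_matrix Q)).
Proof.
set B := euler_matrix Q => detB_neq0.
pose intr_morph := GRing.RMorphism.clone _ _ (intr : int -> rat) _.
set Bq := map_mx (fun z : int => z%:~R : rat) B.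
have detBq : \det Bq = (\det B)%:~R by rewrite (det_map_mx intr_morph).
have unitBq : Bq \in unitmx by rewrite unitmxE detBq unitfE intr_eq0.
rewrite /lambda_of -/B -/Bq normrEsg intrM -scalerA -detBq.
rewrite det_scale_skew_invmx // map_mxZ; congr (_ *: _).
by rewrite /skew_adj map_mxB -map_trmx (map_mx_adj intr_morph).
Qed.

Theorem proposition4p1 (n k : nat) (Q : ice_quiver n k) :
  (1 <= n)%N ->
  \det (euler_matrix Q) != 0 ->
  exists L : 'M[int]_(n + k),
    map_mx (fun z : int => z%:~R : rat) L = lambda_of Q /\
    compatible_of_type (exchange_matrix Q) L
      ((2 * `|\det (euler_matrix Q)|)%:M).
Proof.
move=> _ detB_neq0; set B := euler_matrix Q; set d := \det B.
exists (Num.sg d *: skew_adj B); split.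
  by rewrite lambda_of_sg_skew_adj.
split.
- by rewrite /skew_symmetric linearZ /= trmx_skew_adj scalerN.
- exact: scalar_mx_is_diag.
- by move=> i; rewrite mxE eqxx mulr1n mulr_gt0 ?normr_gt0.
rewrite /exchange_matrix -/B trmx_lsub mul_usub_mx -scalemxAr linearZ /=.
rewrite usubmx_mul_skew_adj ?usubmx_euler_matrix_sym // scale_row_mx scaler0.
by rewrite scale_scalar_mx mulrnAr normrEsg mulr_natl.
Qed.
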